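(* Let $T$ be a permutation tableau, and let $P$ be an alternating path of $T$ with label sequence $p_1p_2\cdots p_r$. Here $p_1$ is the label of the starting dot and $p_r$ is the label of the final black dot. Then $p_1,p_2,\ldots,p_r$ occur in the permutation $\xi(T)$ in this left-to-right order, i.e. $p_1p_2\cdots p_r$ is a subsequence of $\xi(T)$.
   Context: Permutation tableaux. Draw a Ferrers diagram in English convention: rows are left-justified, row lengths weakly decrease from top to bottom, and every column is nonempty. Rows of length zero are allowed. A permutation tableau $T$ is a filling of the cells of such a diagram with 0's and 1's satisfying two conditions: (i) every column contains at least one 1; (ii) no cell containing 0 has both a 1 above it in its column and a 1 to its left in its row. Its length $n$ is the number of rows plus the number of columns. Labels. The southeast boundary path of $n$ unit south/west steps, from the top-right corner to the bottom-left corner, has its steps labeled $1,\ldots,n$ in order. Each row gets the label of its south step, and each column the label of its west step. $(i,j)$ denotes the cell in row $i$ and column $j$. Zeros, ones and rows. A 1 is topmost if there is no 1 above it in its column. A 0 is restricted if there is a 1 above it in its column. A rightmost restricted 0 is a restricted 0 with no restricted 0 to its right in its row. A row is unrestricted if it contains no restricted 0; empty rows are unrestricted. Dots. Black dots are placed on the topmost 1's (one per column), each labeled by its column label. White dots are placed on the rightmost restricted 0's (one per restricted row), each labeled by its row label. Alternating paths. An alternating path is a sequence of dots, identified with the sequence of their labels, built as follows. - From a white dot in cell $(i,j)$, the next dot is the black dot of column $j$. - From a black dot in cell $(i,j)$: if row $i$ is unrestricted, the path ends; otherwise the next dot is the white dot of row $i$. The bijection $\xi$. Start with the labels of the unrestricted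 rows in increasing order. Then process the column labels in decreasing order. For a column $j$: 1. If its black dot is in cell $(i,j)$, insert $j$ immediately to the left of $i$. 2. If column $j$ has white dots in rows $i_1<\cdots<i_k$, insert $i_1\cdots i_k$, in increasing order, immediately to the left of $j$. The result is the permutation $\xi(T)$ of $[n]$. *)

From mathcomp Require Import all_boot.
Set Implicit Arguments. Unset Strict Implicit. Unset Printing Implicit Defensive.

(* Steps of the southeast boundary path are labelled 1..n; [isrow i] says that
   step i is a south step (so i labels a row); otherwise it is a west step and
   labels a column.  Cell (i,j) exists iff i is a row label, j a column label
   and i < j (row i has as length the number of west steps after it).
   Inside column j, "above" means smaller row label; inside row i, "to the
   left" means larger column label.  [fill i j] is the entry of cell (i,j)
   (true = 1, false = 0); values outside cells are irrelevant. *)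
Record tableau := Tableau {
  tn : nat;
  isrow : nat -> bool;
  fill : nat -> nat -> bool }.

Section Defs.
Variable T : tableau.

Definition rowlab (i : nat) : bool := [&& 0 < i, i <= tn T & isrow T i].
Definition collab (j : nat) : bool := [&& 0 < j, j <= tn T & ~~ isrow T j].
Definition cell (i j : nat) : bool := [&& rowlab i, collab j & i < j].
Definition one (i j : nat) : bool := cell i j && fill T i j.
Definition zero (i j : nat) : bool := cell i j && ~~ fill T i j.

Definition ferrers : Prop := forall j, collab j -> exists i, cell i j.

Definition perm_tableau : Prop :=
  [/\ ferrers,
      (forall j, collab j -> exists i, one i j) &
      (forall i j, zero i j ->
         ~ ((exists i', i' < i /\ one i' j) /\ (exists j', j < j' /\ one i j')))].

Definition restricted (i j : nat) : bool :=
  zero i j && has (fun i' => one i' j) (iota 0 i).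
Definition restricted_row (i : nat) : bool :=
  has (restricted i) (iota 0 (tn T).+1).
Definition unrestricted_row (i : nat) : bool := rowlab i && ~~ restricted_row i.

(* row of the topmost 1 of column j (the black dot of column j) *)
Definition top (j : nat) : nat :=
  head 0 [seq i <- iota 0 (tn T).+1 | one i j].
(* column of the rightmost restricted 0 of row i (the white dot of row i) *)
Definition wcol (i : nat) : nat :=
  head 0 [seq j <- iota 0 (tn T).+1 | restricted i j].

(* dots, identified with their labels: black dots carry column labels,
   white dots carry labels of restricted rows *)
Definition is_dot (x : nat) : bool := collab x || (rowlab x && restricted_row x).

Definition alt_step (a b : nat) : bool :=
  if collab a then restricted_row (top a) && (b == top a)
  else b == wcol a.

Definition alt_path (p : seq nat) : Prop :=
  match p with
  | [::] => False
  | x :: q => [/\ is_dot x, path alt_step x q,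
                 collab (last x q) & ~~ restricted_row (top (last x q))]
  end.

Definition ins_before (w : seq nat) (y : nat) (s : seq nat) : seq nat :=
  let k := index y s in take k s ++ w ++ drop k s.

Definition whites (j : nat) : seq nat :=
  [seq i <- iota 0 (tn T).+1 | rowlab i && restricted_row i && (wcol i == j)].

Definition xi_step (s : seq nat) (j : nat) : seq nat :=
  ins_before (whites j) j (ins_before [:: j] (top j) s).

Definition xi : seq nat :=
  foldl xi_step [seq i <- iota 0 (tn T).+1 | unrestricted_row i]
        [seq j <- rev (iota 0 (tn T).+1) | collab j].

End Defs.

From Pilot Require Import Defs.
From mathcomp Require Import all_boot.
Set Implicit Arguments. Unset Strict Implicit. Unset Printing Implicit Defensive.

(* As xi(T) contains each label once, it suffices that every step a -> b of an
   alternating path puts a before b in xi(T); later insertions never reorder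
   letters already present.  A white dot i in column j is inserted, together
   with the other white dots of column j, immediately before j.  For a black
   dot in cell (i, j), the label i is already present when column j is
   processed: either row i is unrestricted, or its white dot lies in a column
   to the right of j, and columns are processed from right to left; then j is
   inserted immediately before i. *)

Lemma pred_head_filter (A : Type) (P : pred A) (x0 : A) s :
  has P s -> P (head x0 (filter P s)).
Proof. by elim: s => //= x s IHs; case: ifP => //= _ /IHs. Qed.

Lemma subseq_path_pairs (A : eqType) (s : seq A) x q :
  uniq s -> x \in s -> path (fun a b => subseq [:: a; b] s) x q ->
  subseq (x :: q) s.
Proof.
move=> uniq_s; elim: q x => [|y q IHq] x; first by rewrite sub1seq.
move=> _ /= /andP [sub_xy path_yq].
have s_y : y \in s by apply: (mem_subseq sub_xy); rewrite !inE eqxx orbT.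
have := IHq y s_y path_yq; move: sub_xy uniq_s.
case: (splitPr s_y) => s1 s2.
rewrite -[[:: x; y]]/([:: x] ++ [:: y]) -[y :: q]/([::] ++ y :: q).
rewrite -[[:: x, y & q]]/([:: x] ++ y :: q) => sub_xy uniq_s.
rewrite !uniq_subseq_pivot // in sub_xy *.
by case/andP: sub_xy => -> _ /andP [_ ->].
Qed.

Lemma perm_ins_before (w : seq nat) y s :
  perm_eq (ins_before w y s) (w ++ s).
Proof. by rewrite /ins_before perm_catCA cat_take_drop. Qed.

Lemma subseq_ins_before w y s : subseq s (ins_before w y s).
Proof.
rewrite /ins_before -{1}(cat_take_drop (index y s) s).
by apply: cat_subseq; [exact: subseq_refl | exact: suffix_subseq].
Qed.

Lemma subseq_ins_before_at w y s :
  y \in s -> subseq (w ++ [:: y]) (ins_before w y s).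
Proof.
move=> s_y; rewrite /ins_before (drop_nth y) ?index_mem // nth_index //.
apply: subseq_trans (suffix_subseq _ _).
by rewrite subseq_cat2l /= eqxx sub0seq.
Qed.

Section PermutationTableau.
Variable T : tableau.

Lemma rowlab_collabF x : rowlab T x -> collab T x = false.
Proof. by case/and3P=> _ _ r_x; rewrite /collab r_x !andbF. Qed.

Lemma collab_rowlabF x : collab T x -> rowlab T x = false.
Proof. by apply: contraTF => /rowlab_collabF ->. Qed.

Lemma mem_whites j x :
  (x \in whites T j) = [&& rowlab T x, restricted_row T x & wcol T x == j].
Proof.
rewrite mem_filter mem_iota ltnS /= andb_idr ?andbA //.
by case/andP=> /andP [/and3P [_ ->]].
Qed.

Lemma perm_xi_step s j : perm_eq (xi_step T s j) (whites T j ++ j :: s).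
Proof.
rewrite /xi_step (permPl (perm_ins_before _ _ _)).
by rewrite perm_cat2l -cat1s perm_ins_before.
Qed.

Lemma mem_foldl_xi_step s cs x :
  (x \in foldl (xi_step T) s cs) =
  [|| x \in s, x \in cs | [&& rowlab T x, restricted_row T x & wcol T x \in cs]].
Proof.
elim: cs s => [|j cs IHcs] s /=; first by rewrite in_nil !andbF !orbF.
rewrite IHcs (perm_mem (perm_xi_step s j)) mem_cat mem_whites !inE.
by case: (rowlab T x) (restricted_row T x) (x \in s) (x \in cs) (x == j)
  (wcol T x == j) (wcol T x \in cs) => [] [] [] [] [] [] [].
Qed.

Lemma uniq_foldl_xi_step s cs :
  uniq s -> all (unrestricted_row T) s -> uniq cs -> all (collab T) cs ->
  uniq (foldl (xi_step T) s cs).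
Proof.
move=> uniq_s unr_s; elim/last_ind: cs => [//|cs j IHcs].
rewrite rcons_uniq all_rcons foldl_rcons => /andP [cs'j uniq_cs] /andP [c_j col_cs].
rewrite (perm_uniq (perm_xi_step _ j)) cat_uniq /= IHcs // andbT.
rewrite filter_uniq ?iota_uniq // mem_whites (collab_rowlabF c_j) /=.
rewrite mem_foldl_xi_step (collab_rowlabF c_j) (negbTE cs'j) !orbF.
apply/andP; split.
  apply/hasPn => x; rewrite mem_foldl_xi_step mem_whites.
  apply: contraTN => /and3P [r_x rr_x /eqP ->].
  have /negbTE -> : x \notin s by apply: contraL rr_x => /(allP unr_s)/andP [].
  have /negbTE -> : x \notin cs.
    by apply: contraL r_x => /(allP col_cs)/collab_rowlabF ->.
  by rewrite (negbTE cs'j) !andbF.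
by apply: contraL c_j => /(allP unr_s)/andP [/rowlab_collabF ->].
Qed.

Lemma subseq_foldl_xi_step s cs : subseq s (foldl (xi_step T) s cs).
Proof.
elim: cs s => [|j cs IHcs] s /=; first exact: subseq_refl.
apply: subseq_trans (IHcs _).
exact: subseq_trans (subseq_ins_before _ _ _) (subseq_ins_before _ _ _).
Qed.

Lemma subseq_xi_step_top s j :
  top T j \in s -> subseq [:: j; top T j] (xi_step T s j).
Proof.
move=> s_top; apply: subseq_trans (subseq_ins_before _ _ _).
exact: subseq_ins_before_at.
Qed.

Lemma subseq_xi_step_white s j i :
  i \in whites T j -> subseq [:: i; j] (xi_step T s j).
Proof.
move=> white_i; apply: subseq_trans (subseq_ins_before_at _ _).
  by rewrite -cat1s cat_subseq // sub1seq.
by rewrite (perm_mem (perm_ins_before _ _ _)) mem_head.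
Qed.

Let xi_init := [seq i <- iota 0 (tn T).+1 | unrestricted_row T i].
Let xi_cols := [seq j <- rev (iota 0 (tn T).+1) | collab T j].

Lemma mem_xi_cols j : (j \in xi_cols) = collab T j.
Proof.
rewrite mem_filter mem_rev mem_iota ltnS /= andb_idr //.
by case/and3P=> _ ->.
Qed.

Lemma mem_xi_init i : (i \in xi_init) = unrestricted_row T i.
Proof.
rewrite mem_filter mem_iota ltnS /= andb_idr //.
by case/andP=> /and3P [_ ->].
Qed.

Lemma uniq_xi : uniq (xi T).
Proof.
by apply: uniq_foldl_xi_step; rewrite ?filter_uniq ?rev_uniq ?iota_uniq ?filter_all.
Qed.

Lemma mem_xi x :
  (x \in xi T) = [|| unrestricted_row T x, collab T x
                   | [&& rowlab T x, restricted_row T x & collab T (wcol T x)]].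
Proof. by rewrite mem_foldl_xi_step mem_xi_init !mem_xi_cols. Qed.

Lemma xi_split j : collab T j -> exists cs1 cs2,
  xi T = foldl (xi_step T) (xi_step T (foldl (xi_step T) xi_init cs1) j) cs2
  /\ forall k, collab T k -> j < k -> k \in cs1.
Proof.
move=> c_j; have /and3P [_ le_j_n _] := c_j.
set cs1 := [seq k <- rev (iota j.+1 (tn T - j)) | collab T k].
exists cs1, [seq k <- rev (iota 0 j) | collab T k]; split.
  have -> : xi T = foldl (xi_step T) xi_init xi_cols by [].
  rewrite /xi_cols -(subnKC le_j_n) -addnS iotaD /= rev_cat rev_cons cat_rcons.
  by rewrite filter_cat /= c_j foldl_cat.
move=> k c_k lt_j_k; rewrite mem_filter c_k mem_rev mem_iota lt_j_k addSn subnKC //.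
by case/and3P: c_k.
Qed.

Lemma restricted_wcol i : restricted_row T i -> restricted T i (wcol T i).
Proof. exact: pred_head_filter. Qed.

Lemma collab_wcol i : restricted_row T i -> collab T (wcol T i).
Proof. by move/restricted_wcol => /andP [/andP [/and3P []]]. Qed.

Lemma subseq_xi_white i :
  rowlab T i -> restricted_row T i -> subseq [:: i; wcol T i] (xi T).
Proof.
move=> r_i rr_i; have [cs1 [cs2 [-> _]]] := xi_split (collab_wcol rr_i).
apply: subseq_trans (subseq_foldl_xi_step _ _).
by apply: subseq_xi_step_white; rewrite mem_whites r_i rr_i /=.
Qed.

Lemma mem_xi_dot x : is_dot T x -> x \in xi T.
Proof.
rewrite mem_xi => /orP [-> | /andP [r_x rr_x]]; first by rewrite orbT.
by rewrite r_x rr_x collab_wcol ?orbT.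
Qed.

Hypothesis PT : perm_tableau T.

Lemma one_top j : collab T j -> Defs.one T (top T j) j.
Proof.
case: PT => _ col_one _ c_j.
apply: (@pred_head_filter _ (fun i => Defs.one T i j)).
have [i one_ij] := col_one j c_j; apply/hasP; exists i => //.
rewrite mem_iota ltnS /=.
by case/andP: one_ij => /and3P [/and3P [_ -> _]].
Qed.

Lemma rowlab_top j : collab T j -> rowlab T (top T j).
Proof. by move/one_top => /andP [/and3P []]. Qed.

Lemma top_lt_wcol j :
  collab T j -> restricted_row T (top T j) -> j < wcol T (top T j).
Proof.
move=> c_j /restricted_wcol; have := one_top c_j.
set i := top T j; set k := wcol T i => one_ij /andP [zero_ik above_ik].
case: PT => _ _ no_zero_hook.
case: ltngtP => // [lt_k_j | eq_k_j].
  case: (no_zero_hook i k zero_ik); split; last by exists j.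
  by have /hasP [i'] := above_ik; rewrite mem_iota /= => lt_i'_i; exists i'.
move: zero_ik one_ij; rewrite /zero /Defs.one eq_k_j => /andP [_ /negbTE ->].
by rewrite andbF.
Qed.

Lemma subseq_xi_black j : collab T j -> subseq [:: j; top T j] (xi T).
Proof.
move=> c_j; have [cs1 [cs2 [-> cs1_gt]]] := xi_split c_j.
apply: subseq_trans (subseq_foldl_xi_step _ _).
apply: subseq_xi_step_top; rewrite mem_foldl_xi_step mem_xi_init.
rewrite /unrestricted_row rowlab_top //=.
case: (boolP (restricted_row T (top T j))) => //= rr_top.
by rewrite orbC cs1_gt ?collab_wcol ?top_lt_wcol.
Qed.

Lemma alt_step_dot a b :
  is_dot T a -> alt_step T a b -> is_dot T b && subseq [:: a; b] (xi T).
Proof.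
rewrite /alt_step /is_dot; case: ifP => [c_a _ | c'_a /= dot_a /eqP ->].
  by case/andP=> rr_top /eqP ->; rewrite rowlab_top ?rr_top ?orbT ?subseq_xi_black.
by case/andP: dot_a => r_a rr_a; rewrite collab_wcol ?subseq_xi_white.
Qed.

Lemma alt_step_path_xi x q : is_dot T x -> path (alt_step T) x q ->
  path (fun a b => subseq [:: a; b] (xi T)) x q.
Proof.
elim: q x => [//|y q IHq] x dot_x /= /andP [step_xy path_yq].
by have /andP [dot_y ->] := alt_step_dot dot_x step_xy; rewrite IHq.
Qed.

End PermutationTableau.

Theorem lemma2p4 (T : tableau) (p : seq nat) :
  perm_tableau T -> alt_path T p -> subseq p (xi T).
Proof.
move=> PT; case: p => [|x q] //= [dot_x path_xq _ _].
apply: subseq_path_pairs (uniq_xi T) (mem_xi_dot dot_x) _.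
exact: alt_step_path_xi.
Qed.
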